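(* Let $(\omega,\nabla)$ be Poisson-compatible. The quantum torsion of the quantised connection $\nabla_Q$ on $\Omega^1A_1$ is $$(\wedge_1\nabla_Q-d)(\xi)=(\wedge\nabla-d)(\xi)+\tfrac\lambda4(\partial_j\lrcorner\nabla_i\xi)\,\omega^{is}T^j{}_{nm;s}\,dx^m\wedge dx^n .$$
   Context: Coordinates $x^i$, summation convention, $\lrcorner$ interior product, $a_{,i}=\partial_ia$. $\nabla_jdx^i=-\Gamma^i_{jk}dx^k$; torsion $T^i_{jk}=\Gamma^i_{jk}-\Gamma^i_{kj}$; curvature $[\nabla_i,\nabla_j]dx^k=-R^k{}_{mij}dx^m$; semicolon = covariant derivative w.r.t. $\nabla$. Poisson-compatible: $d(\omega^{ij})-\omega^{kj}\nabla_k(dx^i)-\omega^{ik}\nabla_k(dx^j)=0$. Work over $\mathbb{C}[\lambda]/(\lambda^2)$. $\Omega^1A_1$: 1-forms with $a\bullet\xi=a\xi+\frac\lambda2\omega^{ij}a_{,i}\nabla_j\xi$, $\xi\bullet a=a\xi-\frac\lambda2\omega^{ij}a_{,i}\nabla_j\xi$; $\otimes_1$ over the algebra with $a\bullet b=ab+\frac\lambda2\omega^{ij}a_{,i}b_{,j}$; $q(\xi\otimes_1\eta)=\xi\otimes_0\eta+\frac\lambda2\omega^{ij}\nabla_i\xi\otimes_0\nabla_j\eta$. $\nabla_Q\xi=q^{-1}(dx^k\otimes_0\nabla_k\xi)-\frac\lambda2\omega^{ij}dx^k\otimes_1[\nabla_k,\nabla_j]\nabla_i\xi$. $\xi\wedge_1\eta=\xi\wedge\eta+\frac\lambda2\omega^{ij}\nabla_i\xi\wedge\nabla_j\eta+\lambda(-1)^{|\xi|+1}H^{ij}\wedge(\partial_i\lrcorner\xi)\wedge(\partial_j\lrcorner\eta)$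 with $H^{ij}=\frac14\omega^{is}(T^j{}_{nm;s}-2R^j{}_{nms})dx^m\wedge dx^n$. *)

(* A  = (complex-valued smooth) functions on a coordinate
   chart, abstracted as a commutative ring with n commuting derivations
   D i = partial_i ; forms are written in the coordinate basis dx^i. *)
From HB Require Import structures.
From mathcomp Require Import all_boot all_algebra.
Set Implicit Arguments. Unset Strict Implicit. Unset Printing Implicit Defensive.
Import GRing.Theory.
Local Open Scope ring_scope.

Section QuantumTorsion.
Variables (A : comUnitRingType) (n : nat).
Variable D : 'I_n -> A -> A.
Variable G : 'I_n -> 'I_n -> 'I_n -> A.     (* G i j k = Gamma^i_{jk}    *)
Variable w : 'I_n -> 'I_n -> A.

Definition form1 := 'I_n -> A.
(* 2-forms: array W with  alpha = \sum_{m<p} W m p dx^m /\ dx^p,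
   i.e. \sum_{m,p} c m p dx^m /\ dx^p  is represented by  c m p - c p m. *)
Definition form2 := 'I_n -> 'I_n -> A.

Definition two_of (c : 'I_n -> 'I_n -> A) : form2 := fun m p => c m p - c p m.
Definition add2 (f g : form2) : form2 := fun a b => f a b + g a b.
Definition sub2 (f g : form2) : form2 := fun a b => f a b - g a b.
Definition lsum2 (s : seq form2) : form2 := fun a b => \sum_(f <- s) f a b.
Definition scale1 (c : A) (x : form1) : form1 := fun k => c * x k.

Definition half : A := (2%:R)^-1.
Definition quarter : A := (4%:R)^-1.

Definition dx (k : 'I_n) : form1 := fun p => (p == k)%:R.
Definition wedge (x y : form1) : form2 := two_of (fun m p => x m * y p).
Definition d1 (x : form1) : form2 := two_of (fun j k => D j (x k)).
(* nabla_j on 1-forms:  nabla_j dx^i = - Gamma^i_{jk} dx^k, Leibniz *)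
Definition nabla (j : 'I_n) (x : form1) : form1 :=
  fun k => D j (x k) - \sum_i G i j k * x i.

(* torsion T^i_{jk} and curvature R^k_{mij} ([nabla_i,nabla_j]dx^k = -R^k_{mij}dx^m) *)
Definition torsion (i j k : 'I_n) : A := G i j k - G i k j.
Definition curv (k m i j : 'I_n) : A :=
  nabla j (nabla i (dx k)) m - nabla i (nabla j (dx k)) m.

Definition cov12 (X : 'I_n -> 'I_n -> 'I_n -> A) (j a b s : 'I_n) : A :=
  D s (X j a b) + \sum_p G j s p * X p a b
  - \sum_p G p s a * X j p b - \sum_p G p s b * X j a p.

Definition poisson_bivector : Prop :=
  (forall i j, w i j = - w j i) /\
  (forall i j k, \sum_l (w i l * D l (w j k) + w j l * D l (w k i)
                          + w k l * D l (w i j)) = 0).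

Definition poisson_compatible : Prop :=
  forall i j p, D p (w i j) - \sum_k w k j * nabla k (dx i) p
                - \sum_k w i k * nabla k (dx j) p = 0.

Definition Hform (i j : 'I_n) : form2 :=
  two_of (fun m p => quarter * \sum_s w i s *
                     (cov12 torsion j p m s - 2%:R * curv j p m s)).

(* element a + lambda b of Omega^2 (x) C[lambda]/(lambda^2) is the pair (a,b) *)
(* quantum wedge of two classical 1-forms (|xi| = 1, so the sign is +1) *)
Definition wedge1 (x y : form1) : form2 * form2 :=
  (wedge x y,
   fun a b => half * (\sum_i \sum_j w i j * wedge (nabla i x) (nabla j y) a b)
              + \sum_i \sum_j Hform i j a b * x i * y j).

(* elements of Omega^1A_1 (x)_1 Omega^1A_1, given by a representing formal
   sum  t.1 + lambda t.2  of pure tensors xi (x)_1 eta of classical 1-forms *)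
Definition tensor1 := (seq (form1 * form1) * seq (form1 * form1))%type.
Definition tadd (t u : tensor1) : tensor1 := (t.1 ++ u.1, t.2 ++ u.2).

Definition wedge1_t (t : tensor1) : form2 * form2 :=
  (lsum2 [seq (wedge1 p.1 p.2).1 | p <- t.1],
   add2 (lsum2 [seq (wedge1 p.1 p.2).2 | p <- t.1])
        (lsum2 [seq wedge p.1 p.2 | p <- t.2])).

Definition qinv (X : seq (form1 * form1)) : tensor1 :=
  (X, flatten [seq [seq (scale1 (- (half * w i j)) (nabla i p.1), nabla j p.2)
                   | i <- enum 'I_n, j <- enum 'I_n]
              | p <- X]).

Definition comm_nabla (k j : 'I_n) (x : form1) : form1 :=
  fun p => nabla k (nabla j x) p - nabla j (nabla k x) p.

Definition nablaQ (x : form1) : tensor1 :=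
  tadd (qinv [seq (dx k, nabla k x) | k <- enum 'I_n])
       ([::], flatten [seq [seq (scale1 (- (half * w i j)) (dx k),
                                 comm_nabla k j (nabla i x))
                           | j <- enum 'I_n, k <- enum 'I_n]
                      | i <- enum 'I_n]).

Definition qtorsion (x : form1 * form1) : form2 * form2 :=
  let t0 := wedge1_t (nablaQ x.1) in
  let t1 := wedge1_t (nablaQ x.2) in
  (sub2 t0.1 (d1 x.1), add2 t0.2 (sub2 t1.1 (d1 x.2))).

Definition ctorsion (x : form1) : form2 :=
  sub2 (lsum2 [seq wedge (dx j) (nabla j x) | j <- enum 'I_n]) (d1 x).

Definition torsion_corr (x : form1) : form2 :=
  two_of (fun m p => quarter * \sum_i \sum_j \sum_s
                       nabla i x j * w i s * cov12 torsion j p m s).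

Definition rhs (x : form1 * form1) : form2 * form2 :=
  (ctorsion x.1, add2 (ctorsion x.2) (torsion_corr x.1)).

End QuantumTorsion.

(* Expanding [wedge_1 nabla_Q xi], the [- lambda/2 omega^{ij} nabla_i (x) nabla_j]
   correction in [q^{-1}] cancels the omega-term of the quantum wedge, leaving the
   H-term and the commutator term.  On 1-forms [[nabla_k, nabla_j]] acts through the
   curvature alone, so the commutator term cancels the curvature part of H exactly and
   only its torsion part remains. *)

From Pilot Require Import Defs.
From HB Require Import structures.
From mathcomp Require Import all_boot all_algebra.
From mathcomp Require Import ring.
From Stdlib Require Import FunctionalExtensionality.
Import GRing.Theory.
Local Open Scope ring_scope.

Section QuantumTorsionProof.
Variables (A : comUnitRingType) (n : nat).
Variables (D : 'I_n -> A -> A) (G : 'I_n -> 'I_n -> 'I_n -> A) (w : 'I_n -> 'I_n -> A).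
Hypothesis D_add : forall i a b, D i (a + b) = D i a + D i b.
Hypothesis D_mul : forall i a b, D i (a * b) = D i a * b + a * D i b.
Hypothesis D_comm : forall i j a, D i (D j a) = D j (D i a).

Local Notation nabla := (nabla D G).
Local Notation dx := (dx A).
Local Notation half := (Defs.half A).

Lemma D0 i : D i 0 = 0.
Proof. by apply: (addIr (D i 0)); rewrite -D_add !add0r. Qed.

Lemma DN i a : D i (- a) = - D i a.
Proof. by apply: (addIr (D i a)); rewrite -D_add !addNr D0. Qed.

Lemma D_sum i (F : 'I_n -> A) : D i (\sum_k F k) = \sum_k D i (F k).
Proof. exact: (big_morph (D i) (D_add i) (D0 i)). Qed.

Lemma sum_dx_at (F : 'I_n -> A) a : \sum_k dx k a * F k = F a.
Proof.
rewrite (bigD1 a) //= /dx eqxx mul1r big1 ?addr0 // => k /negbTE.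
by rewrite eq_sym => ->; rewrite mul0r.
Qed.

Lemma sum_dx_coef (F : 'I_n -> A) e : \sum_l dx e l * F l = F e.
Proof.
rewrite (bigD1 e) //= /dx eqxx mul1r big1 ?addr0 // => k /negbTE ->.
by rewrite mul0r.
Qed.

Definition nabla_nabla_coef (k j p l : 'I_n) : A :=
  \sum_i G i k p * G l j i - D k (G l j p).

Lemma nabla_nablaE k j (y : form1 A n) p :
  nabla k (nabla j y) p =
  D k (D j (y p)) - (\sum_i G i j p * D k (y i) + \sum_i G i k p * D j (y i))
  + \sum_l y l * nabla_nabla_coef k j p l.
Proof.
rewrite /nabla /nabla_nabla_coef D_add DN D_sum.
under eq_bigr => i _ do rewrite D_mul.
under [in X in _ - X]eq_bigr => i _ do rewrite mulrBr mulr_sumr.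
under [X in _ = _ + X]eq_bigr => l _ do rewrite mulrBr mulr_sumr.
rewrite sumrB big_split sumrB /= exchange_big /=.
have -> : \sum_(i < n) \sum_(q < n) G q k p * (G i j q * y i) =
          \sum_(i < n) \sum_(q < n) y i * (G q k p * G i j q).
  by apply: eq_bigr => i _; apply: eq_bigr => q _; ring.
have -> : \sum_(i < n) y i * D k (G i j p) = \sum_(i < n) D k (G i j p) * y i.
  by apply: eq_bigr => i _; rewrite mulrC.
ring.
Qed.

Lemma comm_nablaE k j y p :
  comm_nabla D G k j y p = \sum_l y l * (nabla_nabla_coef k j p l - nabla_nabla_coef j k p l).
Proof.
rewrite /comm_nabla !nabla_nablaE D_comm.
under [RHS]eq_bigr => l _ do rewrite mulrBr.
rewrite sumrB; ring.
Qed.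

Lemma comm_nabla_curv k j y p :
  comm_nabla D G k j y p = - \sum_l y l * curv D G l p k j.
Proof.
have curvE e : curv D G e p k j = nabla_nabla_coef j k p e - nabla_nabla_coef k j p e.
  by rewrite /curv -/(comm_nabla D G j k (dx e) p) comm_nablaE sum_dx_coef.
rewrite comm_nablaE -sumrN; apply: eq_bigr => l _.
by rewrite curvE; ring.
Qed.

Lemma sum_wedge_dx_comm j y a b :
  \sum_k wedge (dx k) (comm_nabla D G k j y) a b =
  \sum_l y l * (curv D G l a b j - curv D G l b a j).
Proof.
rewrite /wedge /two_of sumrB !sum_dx_at !comm_nabla_curv opprK addrC -sumrB.
by apply: eq_bigr => l _; ring.
Qed.

Lemma sum_enum_ord (F : 'I_n -> A) : \sum_(i <- enum 'I_n) F i = \sum_i F i.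
Proof. by rewrite big_enum. Qed.

Lemma wedge_scale1 c (u v : form1 A n) a b : wedge (scale1 c u) v a b = c * wedge u v a b.
Proof. rewrite /wedge /two_of /scale1; ring. Qed.

Lemma wedge1_t_qinv2 X a b :
  (wedge1_t D G w (qinv D G w X)).2 a b =
  \sum_(p <- X) \sum_i \sum_j Hform D G w i j a b * p.1 i * p.2 j.
Proof.
rewrite /wedge1_t /qinv /add2 /lsum2 /= !big_map big_flatten /= big_map.
rewrite -big_split /=.
apply: eq_bigr => p _; rewrite big_allpairs_dep /= !sum_enum_ord.
rewrite addrAC -[RHS]add0r; congr (_ + _); rewrite mulr_sumr -big_split /=.
rewrite big1 // => i _; rewrite sum_enum_ord mulr_sumr -big_split big1 // => j _ /=.
by rewrite wedge_scale1 mulrA mulNr addrN.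
Qed.

Lemma wedge1_t_add_lambda1 t s :
  (wedge1_t D G w (tadd t ([::], s))).1 = (wedge1_t D G w t).1.
Proof. by rewrite /wedge1_t /= cats0. Qed.

Lemma wedge1_t_add_lambda2 t s a b :
  (wedge1_t D G w (tadd t ([::], s))).2 a b =
  (wedge1_t D G w t).2 a b + \sum_(p <- s) wedge p.1 p.2 a b.
Proof. by rewrite /wedge1_t /add2 /lsum2 /= cats0 map_cat big_cat !big_map addrA. Qed.

Lemma wedge1_t_nablaQ_classical x :
  (wedge1_t D G w (nablaQ D G w x)).1 = lsum2 [seq wedge (dx j) (nabla j x) | j <- enum 'I_n].
Proof. by rewrite /nablaQ wedge1_t_add_lambda1 /wedge1_t -map_comp. Qed.

Lemma wedge1_t_nablaQ_lambda x a b :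
  (wedge1_t D G w (nablaQ D G w x)).2 a b =
  \sum_k \sum_j Hform D G w k j a b * nabla k x j
  - half * \sum_i \sum_j w i j * \sum_l nabla i x l * (curv D G l a b j - curv D G l b a j).
Proof.
rewrite /nablaQ wedge1_t_add_lambda2 wedge1_t_qinv2 !big_map big_flatten big_map !sum_enum_ord.
congr (_ + _).
  apply: eq_bigr => k _; rewrite exchange_big; apply: eq_bigr => j _.
  rewrite -[RHS](sum_dx_coef (fun i => Hform D G w i j a b * nabla k x j)).
  by apply: eq_bigr => i _ /=; ring.
rewrite mulr_sumr -sumrN; apply: eq_bigr => i _.
rewrite big_allpairs_dep sum_enum_ord mulr_sumr -sumrN; apply: eq_bigr => j _.
rewrite sum_enum_ord (eq_bigr (fun k => - (half * w i j) *
  wedge (dx k) (comm_nabla D G k j (nabla i x)) a b)) => [|k _]; last exact: wedge_scale1.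
by rewrite -mulr_sumr sum_wedge_dx_comm mulNr mulrA.
Qed.

Lemma half_quarterE : (2%:R : A) \is a GRing.unit -> half = 2%:R * quarter A.
Proof.
move=> two_unit; rewrite /Defs.half /quarter -[4%:R]/((2 * 2)%N%:R) natrM.
by rewrite invrM // mulrA divrr ?mul1r.
Qed.

Lemma torsion_corrE x a b : (2%:R : A) \is a GRing.unit ->
  torsion_corr D G w x a b =
  \sum_k \sum_j Hform D G w k j a b * nabla k x j
  - half * \sum_i \sum_j w i j * \sum_l nabla i x l * (curv D G l a b j - curv D G l b a j).
Proof.
move=> two_unit; rewrite /torsion_corr /Hform /two_of !mulr_sumr -!sumrB.
apply: eq_bigr => k _.
under [X in _ = _ - half * X]eq_bigr do rewrite mulr_sumr.
rewrite [X in _ = _ - half * X]exchange_big !mulr_sumr -!sumrB.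
apply: eq_bigr => j _; rewrite !mulr_sumr mulrBl !mulr_suml -!sumrB.
apply: eq_bigr => s _; rewrite half_quarterE //; ring.
Qed.

End QuantumTorsionProof.

Theorem proposition4p9 (A : comUnitRingType) (n : nat)
  (D : 'I_n -> A -> A) (G : 'I_n -> 'I_n -> 'I_n -> A) (w : 'I_n -> 'I_n -> A)
  (D_add : forall i a b, D i (a + b) = D i a + D i b)
  (D_mul : forall i a b, D i (a * b) = D i a * b + a * D i b)
  (D_comm : forall i j a, D i (D j a) = D j (D i a))
  (two_unit : (2%:R : A) \is a GRing.unit)
  (w_poisson : poisson_bivector D w)
  (compat : poisson_compatible D G w)
  (xi : form1 A n * form1 A n) :
  qtorsion D G w xi = rhs D G w xi.
Proof.
case: xi => x y; rewrite /qtorsion /rhs /ctorsion; cbv zeta.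
rewrite !wedge1_t_nablaQ_classical.
congr pair; do 2![apply: functional_extensionality => ?].
by rewrite /add2 wedge1_t_nablaQ_lambda // -torsion_corrE // addrC.
Qed.
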